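(* Let $n\ge 1$ and let $Y$ be a semistandard Young tableau on the alphabet $\mathcal{A}_n$ which is an $sp_{2n}$-highest weight tableau. Then for every $1\le i\le n$, every entry of $Y$ equal to $i$ lies in the $i$-th row, and every entry equal to $\bar i$ lies in a row strictly below the $i$-th row.
   Context: $\mathcal{A}_n=\{1<2<\dots<n<\bar n<\dots<\bar 2<\bar 1\}$. Young diagrams are in English convention (row 1 on top). Semistandard: entries weakly increase along rows and strictly increase down columns. The reading of $Y$ is the word $a_1\cdots a_N$ obtained by reading each column top to bottom and concatenating columns from rightmost to leftmost. Crystal $B_n$ on $\mathcal{A}_n$: for $1\le i<n$, $\tilde f_i(i)=i+1$, $\tilde f_i(\overline{i+1})=\bar i$; $\tilde f_n(n)=\bar n$; $\tilde f_i(b)=0$ otherwise; $\tilde e_i$ is the partial inverse. $\varepsilon_i(b)=\max\{k:\tilde e_i^k b\ne0\}$, $\varphi_i(b)=\max\{k:\tilde f_i^kb\neq 0\}$. Tensor rule: $\tilde e_i(b_1\otimes b_2)=\tilde e_i(b_1)\otimes b_2$ if $\varphi_i(b_1)\ge\varepsilon_i(b_2)$, else $b_1\otimes\tilde e_i(b_2)$; $\tilde f_i(b_1\otimes b_2)=\tilde f_i(b_1)\otimes b_2$ if $\varphi_i(b_1)>\varepsilon_i(b_2)$, else $b_1\otimes\tilde f_i(b_2)$; iterated as $a_1\otimes\cdots\otimes a_N=(a_1\otimes\cdots\otimes a_{N-1})\otimes a_N$. $Y$ is an $sp_{2n}$-highest weight tableau if $\tilde e_i(a_1\otimes\cdots\otimes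 a_N)=0$ in $B_n^{\otimes N}$ for all $1\le i\le n$. *)

From mathcomp Require Import all_boot.
Set Implicit Arguments. Unset Strict Implicit. Unset Printing Implicit Defensive.

(* Letters of the alphabet A_n: [L k] is the unbarred letter k,
   [Lb k] is the barred letter \bar k; valid letters have 1 <= k <= n. *)
Inductive letter := L of nat | Lb of nat.

Definition valid_letter (n : nat) (x : letter) : bool :=
  match x with L k | Lb k => (1 <= k) && (k <= n) end.

(* Position in the total order 1 < 2 < ... < n < \bar n < ... < \bar 1. *)
Definition rank (n : nat) (x : letter) : nat :=
  match x with L k => k | Lb k => (2 * n).+1 - k end.

Definition letter_le n (x y : letter) : bool := rank n x <= rank n y.
Definition letter_lt n (x y : letter) : bool := rank n x < rank n y.

(* Crystal operators of B_n on single letters (0 is [None]). *)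
Definition letter_f (n i : nat) (x : letter) : option letter :=
  match x with
  | L k => if (k == i) && (i < n) then Some (L i.+1)
           else if (k == n) && (i == n) then Some (Lb n) else None
  | Lb k => if (k == i.+1) && (i < n) then Some (Lb i) else None
  end.

Definition letter_e (n i : nat) (x : letter) : option letter :=
  match x with
  | L k => if (k == i.+1) && (i < n) then Some (L i) else None
  | Lb k => if (k == i) && (i < n) then Some (Lb i.+1)
            else if (k == n) && (i == n) then Some (L n) else None
  end.

(* max {k <= fuel : g^k x <> 0}; with fuel large enough this is
   max {k : g^k x <> 0} (epsilon_i / phi_i). *)
Definition maxk (T : Type) (fuel : nat) (g : T -> option T) (x : T) : nat :=
  foldr maxn 0 [seq k <- iota 0 fuel.+1 | isSome (iter k (obind g) (Some x))].

Definition word := seq letter.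

(* Crystal operators (e_i, f_i) on words of length N, viewed as
   a_1 (x) ... (x) a_N = (a_1 (x) ... (x) a_{N-1}) (x) a_N, using the tensor rule.
   The fuel 2N'+2 bounds phi_i on words of length N' (each letter has phi_i <= 1). *)
Fixpoint wops (n i N : nat) : (word -> option word) * (word -> option word) :=
  match N with
  | 0 => (fun _ => None, fun _ => None)
  | N'.+1 =>
    let e' := (wops n i N').1 in
    let f' := (wops n i N').2 in
    let phi1 (b : word) := maxk (2 * N').+2 f' b in
    let eps2 (a : letter) := maxk 2 (letter_e n i) a in
    if N' is 0 then
      (fun w => omap (fun b => [:: b]) (letter_e n i (nth (L 0) w 0)),
       fun w => omap (fun b => [:: b]) (letter_f n i (nth (L 0) w 0)))
    else
      (fun w =>
         let b1 := take N' w in let a := nth (L 0) w N' in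
         if eps2 a <= phi1 b1 then omap (fun b => rcons b a) (e' b1)
         else omap (fun b => rcons b1 b) (letter_e n i a),
       fun w =>
         let b1 := take N' w in let a := nth (L 0) w N' in
         if eps2 a < phi1 b1 then omap (fun b => rcons b a) (f' b1)
         else omap (fun b => rcons b1 b) (letter_f n i a))
  end.

Definition word_e (n i : nat) (w : word) : option word := (wops n i (size w)).1 w.
Definition word_f (n i : nat) (w : word) : option word := (wops n i (size w)).2 w.

(* Tableaux: list of rows, row 1 (index 0) on top (English convention). *)
Definition tableau := seq (seq letter).

Definition entry (Y : tableau) (r c : nat) : letter := nth (L 0) (nth [::] Y r) c.

Definition is_ssyt (n : nat) (Y : tableau) : Prop :=
  [/\ sorted geq (map size Y),
      all (all (valid_letter n)) Y,
      all (sorted (letter_le n)) Y &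
      (forall r c, c < size (nth [::] Y r.+1) ->
         letter_lt n (entry Y r c) (entry Y r.+1 c))].

Definition column (Y : tableau) (c : nat) : word :=
  [seq nth (L 0) row c | row <- Y & c < size row].

Definition reading (Y : tableau) : word :=
  flatten [seq column Y c | c <- rev (iota 0 (size (head [::] Y)))].

Definition sp_highest_weight (n : nat) (Y : tableau) : Prop :=
  forall i, 1 <= i <= n -> word_e n i (reading Y) = None.

From HB Require Import structures.
From mathcomp Require Import all_boot zify.

(* Let x, in row r and column c, be the first entry in reading order that is
   out of place. Columns strictly increase, so x lies at least two steps above
   r in the order of A_n, hence some e_i with r < i <= n acts on x. Every letter
   read before x has index at most r: entries above x or in columns to its right
   and higher rows are in place, and an entry to the right of x in row r' >= r
   dominates the entry of row r in its column, which is in place and larger than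
   x, hence a barred letter of index <= r. All these letters are killed by f_i,
   so phi_i of the prefix before x vanishes and, by the tensor rule, e_i acts on
   the prefix ending with x. But e_i kills every prefix of a word it kills. *)

Set Implicit Arguments.
Unset Strict Implicit.
Unset Printing Implicit Defensive.

Definition letter_to_sum (x : letter) : nat + nat :=
  match x with L k => inl k | Lb k => inr k end.
Definition sum_to_letter (s : nat + nat) : letter :=
  match s with inl k => L k | inr k => Lb k end.
Lemma letter_to_sumK : cancel letter_to_sum sum_to_letter. Proof. by case. Qed.
HB.instance Definition _ := Equality.copy letter (can_type letter_to_sumK).

Lemma foldr_maxn_gt0 (s : seq nat) : (0 < foldr maxn 0 s) = has (leq 1) s.
Proof. by elim: s => //= k s IH; rewrite leq_max IH. Qed.

Lemma maxk_gt0 (T : Type) fuel (g : T -> option T) x :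
  0 < fuel -> (0 < maxk fuel g x) = isSome (g x).
Proof.
move=> fuel_gt0; rewrite /maxk foldr_maxn_gt0.
apply/hasP/idP => [[[|k] //]| gx]; last first.
  by exists 1; rewrite // mem_filter /= gx in_cons mem_iota; lia.
by rewrite mem_filter iterSr /=; case: (g x) => // /andP[]; rewrite iter_fix.
Qed.

Lemma maxk_eq0 (T : Type) fuel (g : T -> option T) x : g x = None -> maxk fuel g x = 0.
Proof.
move=> gx; apply/eqP; rewrite -leqn0 leqNgt.
by case: fuel => [|fuel]; last by rewrite maxk_gt0 ?gx.
Qed.

Section WordCrystal.
Variables n i : nat.

Lemma word_e_rcons w a : 0 < size w ->
  word_e n i (rcons w a) =
  if maxk 2 (letter_e n i) a <= maxk (2 * size w).+2 (wops n i (size w)).2 w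
  then omap (rcons^~ a) (word_e n i w)
  else omap (rcons w) (letter_e n i a).
Proof.
rewrite /word_e size_rcons; case sizeN: (size w) => [|N] // _.
have take_w : take N.+1 (rcons w a) = w by rewrite -cats1 -sizeN take_size_cat.
by rewrite [LHS]/= take_w nth_rcons sizeN ltnn eqxx.
Qed.

Lemma word_f_rcons w a : 0 < size w ->
  word_f n i (rcons w a) =
  if maxk 2 (letter_e n i) a < maxk (2 * size w).+2 (wops n i (size w)).2 w
  then omap (rcons^~ a) (word_f n i w)
  else omap (rcons w) (letter_f n i a).
Proof.
rewrite /word_f size_rcons; case sizeN: (size w) => [|N] // _.
have take_w : take N.+1 (rcons w a) = w by rewrite -cats1 -sizeN take_size_cat.
by rewrite [LHS]/= take_w nth_rcons sizeN ltnn eqxx.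
Qed.

Lemma word_e_rcons_None w a : word_e n i (rcons w a) = None -> word_e n i w = None.
Proof.
case: (posnP (size w)) => [/size0nil -> //| w_gt0].
rewrite word_e_rcons //; case: ifP => [|phi_lt]; first by case: (word_e n i w).
by case ea: (letter_e n i a) => //; rewrite (maxk_eq0 2 ea) in phi_lt.
Qed.

Lemma word_e_cat_None w s : word_e n i (w ++ s) = None -> word_e n i w = None.
Proof.
by elim: s w => [|a s IH] w; rewrite ?cats0 // -cat_rcons => /IH /word_e_rcons_None.
Qed.

Lemma word_f_None w : all (fun a => letter_f n i a == None) w -> word_f n i w = None.
Proof.
elim/last_ind: w => [//|w a IH]; rewrite all_rcons => /andP[/eqP fa /IH fw].
case: (posnP (size w)) => [/size0nil -> | w_gt0]; first by rewrite /word_f /= fa.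
by rewrite word_f_rcons // fw fa; case: ifP.
Qed.

(* phi_i(w) = 0, so the tensor rule lets e_i act on x. *)
Lemma word_e_neq_None w x s : all (fun a => letter_f n i a == None) w ->
  isSome (letter_e n i x) -> word_e n i (w ++ x :: s) <> None.
Proof.
move=> /word_f_None fw ex; rewrite -cat_rcons => /word_e_cat_None.
case: (posnP (size w)) => [/size0nil -> | w_gt0].
  by rewrite /word_e /=; case: (letter_e n i x) ex.
have phi0 : maxk (2 * size w).+2 (wops n i (size w)).2 w = 0.
  by apply: maxk_eq0; move: fw; rewrite /word_f.
rewrite word_e_rcons // phi0 leqn0 -[_ == 0]negbK -lt0n maxk_gt0 // ex /=.
by case: (letter_e n i x) ex.
Qed.
End WordCrystal.

Lemma row_lt_size (Y : tableau) r c : c < size (nth [::] Y r) -> r < size Y.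
Proof. by case: (ltnP r (size Y)) => // ?; rewrite nth_default. Qed.

Lemma column_cat (Y Z : tableau) c : column (Y ++ Z) c = column Y c ++ column Z c.
Proof. by rewrite /column filter_cat map_cat. Qed.

Lemma mem_column (Y : tableau) c (a : letter) :
  a \in column Y c -> exists2 r, c < size (nth [::] Y r) & a = entry Y r c.
Proof.
case/mapP=> row; rewrite mem_filter => /andP[lt_c /(nthP [::])[r _ row_r] ->].
by exists r; rewrite /entry row_r.
Qed.

Lemma column_split (Y : tableau) r c : c < size (nth [::] Y r) ->
  column Y c = column (take r Y) c ++ entry Y r c :: column (drop r.+1 Y) c.
Proof.
move=> lt_c; rewrite -{1}(cat_take_drop r Y) (drop_nth [::] (row_lt_size lt_c)).
by rewrite column_cat /column /= lt_c.
Qed.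

Lemma reading_split_column (Y : tableau) c : c < size (head [::] Y) ->
  reading Y = flatten [seq column Y d | d <- rev (iota c.+1 (size (head [::] Y) - c.+1))]
              ++ column Y c ++ flatten [seq column Y d | d <- rev (iota 0 c)].
Proof.
move=> lt_c; rewrite /reading -{1}(subnKC lt_c) iotaD -[in iota 0 _]addn1 iotaD.
by rewrite !rev_cat !map_cat !flatten_cat /= cats0 catA.
Qed.

Section Tableau.
Variables (n : nat) (Y : tableau).
Hypothesis Y_ssyt : is_ssyt n Y.

Lemma size_row_nonincr r r' : r <= r' -> size (nth [::] Y r') <= size (nth [::] Y r).
Proof.
case: Y_ssyt => shape _ _ _ le_rr'.
case: (ltnP r' (size Y)) => [lt_r'Y|]; last by move=> ?; rewrite nth_default.
have geq_trans : transitive geq := rev_trans leq_trans.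
have := sorted_leq_nth geq_trans leqnn 0 shape.
have lt_rY := leq_ltn_trans le_rr' lt_r'Y.
move=> /(_ r r'); rewrite !inE size_map !(nth_map [::]) //; exact.
Qed.

Lemma valid_entry r c : c < size (nth [::] Y r) -> valid_letter n (entry Y r c).
Proof.
case: Y_ssyt => _ valid _ _ lt_c.
by apply: (allP (allP valid _ (mem_nth [::] (row_lt_size lt_c)))); apply: mem_nth.
Qed.

Lemma rank_entry_row_mono r c d : c <= d -> d < size (nth [::] Y r) ->
  rank n (entry Y r c) <= rank n (entry Y r d).
Proof.
case: Y_ssyt => _ _ rows _ le_cd lt_d.
have row_sorted := allP rows _ (mem_nth [::] (row_lt_size lt_d)).
have le_trans : transitive (letter_le n) by move=> ? ? ?; apply: leq_trans.
have := sorted_leq_nth le_trans (fun x => leqnn (rank n x)) (L 0) row_sorted.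
by apply; rewrite ?inE // (leq_ltn_trans le_cd lt_d).
Qed.

Lemma rank_entry_col_mono r r' c : r <= r' -> c < size (nth [::] Y r') ->
  rank n (entry Y r c) <= rank n (entry Y r' c).
Proof.
case: Y_ssyt => _ _ _ cols; elim: r' => [|r' IH]; first by rewrite leqn0 => /eqP->.
rewrite leq_eqVlt => /orP[/eqP-> //| le_rr'] lt_c.
apply: leq_trans (IH le_rr' _) (ltnW (cols _ _ lt_c)).
exact: leq_trans lt_c (size_row_nonincr (leqnSn r')).
Qed.

Lemma row_lt_rank_entry r c : c < size (nth [::] Y r) -> r < rank n (entry Y r c).
Proof.
case: Y_ssyt => _ _ _ cols; elim: r => [|r IH] lt_c.
  by case: (entry Y 0 c) (valid_entry lt_c) => k /andP[]; rewrite /=; lia.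
apply: leq_ltn_trans (IH _) (cols _ _ lt_c).
exact: leq_trans lt_c (size_row_nonincr (leqnSn r)).
Qed.

Lemma reading_split r c : c < size (nth [::] Y r) ->
  exists P S, reading Y = P ++ entry Y r c :: S /\
    {in P, forall a, exists r' c', [/\ c' < size (nth [::] Y r'), a = entry Y r' c'
                                     & c < c' \/ c' = c /\ r' < r]}.
Proof.
move=> lt_c; have lt_cW : c < size (head [::] Y).
  by rewrite -nth0; apply: leq_trans lt_c (size_row_nonincr (leq0n r)).
rewrite (reading_split_column lt_cW) (column_split lt_c) -[(_ ++ _ :: _) ++ _]catA catA.
eexists _, _; split => // a; rewrite mem_cat => /orP[/flatten_mapP[d] | ].
  rewrite mem_rev mem_iota => /andP[lt_cd _] /mem_column[r' lt_d ->].
  by exists r', d; split => //; left.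
case/mem_column=> r' lt_c' ->.
have lt_r'r : r' < r by have := row_lt_size lt_c'; rewrite size_take_min; lia.
rewrite /entry nth_take // in lt_c' *.
by exists r', c; split => //; right.
Qed.

End Tableau.

Definition letter_index (x : letter) : nat := match x with L k | Lb k => k end.

(* The conclusion of the theorem for an entry of the row with list index [r]. *)
Definition in_place (r : nat) (x : letter) : bool :=
  match x with L k => k == r.+1 | Lb k => k <= r end.

Lemma letter_f_index_lt n i a : letter_index a < i -> letter_f n i a = None.
Proof. by case: a => k /= lt_ki; do ![case: ifP => [/andP[/eqP ? ?]|_]; first lia]. Qed.

Lemma index_in_place r x : in_place r x -> letter_index x <= r.+1.
Proof. by case: x => k /=; [move/eqP->|lia]. Qed.

Lemma index_le_in_place n r y z : valid_letter n y -> valid_letter n z ->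
  in_place r y -> r.+1 < rank n y -> rank n y <= rank n z -> letter_index z <= r.
Proof. by case: y => k; case: z => m /= /andP[? ?] /andP[? ?]; lia. Qed.

Lemma rank_out_of_place n r x : valid_letter n x -> r < rank n x -> ~~ in_place r x ->
  r.+1 < rank n x.
Proof. by case: x => k /= /andP[? ?] ?; lia. Qed.

Lemma letter_e_out_of_place n r x : valid_letter n x -> r < rank n x -> ~~ in_place r x ->
  exists2 i, r < i <= n & isSome (letter_e n i x).
Proof.
case: x => k /= /andP[k_gt0 le_kn] lt_r.
  rewrite eq_sym => ne_k; exists k.-1; first lia.
  by rewrite prednK // eqxx ifT //=; lia.
rewrite -ltnNge => lt_rk; exists k; first lia.
have [ge_kn | _] := leqP n k; last by rewrite eqxx.
have -> : k = n by lia.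
by rewrite eqxx.
Qed.

Section HighestWeight.
Variables (n : nat) (Y : tableau).
Hypotheses (Y_ssyt : is_ssyt n Y) (Y_hw : sp_highest_weight n Y).

Lemma in_place_entry_step r c : c < size (nth [::] Y r) ->
  (forall r' c', c < c' -> c' < size (nth [::] Y r') -> in_place r' (entry Y r' c')) ->
  (forall r', r' < r -> in_place r' (entry Y r' c)) ->
  in_place r (entry Y r c).
Proof.
move=> lt_c right_in_place above_in_place; apply/negPn/negP => out.
have x_valid := valid_entry Y_ssyt lt_c.
have r_lt_x := row_lt_rank_entry Y_ssyt lt_c.
have [i /andP[lt_ri le_in] ex] := letter_e_out_of_place x_valid r_lt_x out.
have [P [S [read P_before]]] := reading_split Y_ssyt lt_c.
have /word_e_neq_None : all (fun a => letter_f n i a == None) P.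
  apply/allP => a /P_before[r' [c' [lt_c' -> before]]]; apply/eqP/letter_f_index_lt.
  suff : letter_index (entry Y r' c') <= r by lia.
  case: before => [lt_cc' | [-> lt_r'r]]; last first.
    by have := index_in_place (above_in_place _ lt_r'r); lia.
  have [lt_r'r | le_rr'] := ltnP r' r.
    by have := index_in_place (right_in_place _ _ lt_cc' lt_c'); lia.
  have lt_c'r := leq_trans lt_c' (size_row_nonincr Y_ssyt le_rr').
  apply: (index_le_in_place (valid_entry Y_ssyt lt_c'r) (valid_entry Y_ssyt lt_c')).
  - exact: right_in_place lt_cc' lt_c'r.
  - apply: leq_trans (rank_out_of_place x_valid r_lt_x out) _.
    exact (rank_entry_row_mono Y_ssyt (ltnW lt_cc') lt_c'r).
  - exact (rank_entry_col_mono Y_ssyt le_rr' lt_c').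
have i_range : 1 <= i <= n by lia.
by move/(_ _ S ex); rewrite -read Y_hw.
Qed.

Lemma in_place_entry r c : c < size (nth [::] Y r) -> in_place r (entry Y r c).
Proof.
have [k] : exists k, size (head [::] Y) - c <= k by eexists.
elim: k c r => [|k IHk] c r le_k lt_c.
  have := leq_trans lt_c (size_row_nonincr Y_ssyt (leq0n r)); rewrite nth0; lia.
elim/ltn_ind: r lt_c => r IHr lt_c; apply: (in_place_entry_step lt_c).
  by move=> r' c' lt_cc' lt_c'; apply: IHk lt_c'; lia.
move=> r' lt_r'r; apply: (IHr _ lt_r'r).
exact: leq_trans lt_c (size_row_nonincr Y_ssyt (ltnW lt_r'r)).
Qed.

End HighestWeight.

Theorem lemma2p6 (n : nat) (Y : tableau) :
  1 <= n -> is_ssyt n Y -> sp_highest_weight n Y ->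
  forall i, 1 <= i <= n ->
  forall r c, c < size (nth [::] Y r) ->
    (entry Y r c = L i -> r.+1 = i) /\ (entry Y r c = Lb i -> i < r.+1).
Proof.
move=> _ Y_ssyt Y_hw i _ r c lt_c.
have := in_place_entry Y_ssyt Y_hw lt_c.
by case: (entry Y r c) => k /= k_in_place; split=> // -[<-] //; apply/esym/eqP.
Qed.
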